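(* Let $X,Y\in\mathbf{R}$ with $Y\ge1$, and let $f\colon(X,X+Y]\to\mathbf{R}$ be a real function with continuous derivatives up to order $2$ such that $0<\lambda\le f''(x)\le\Lambda$ for $X<x\le X+Y$. Then \[ \Bigl|\frac{1}{Y}\sum_{X<n\le X+Y}e(f(n))\Bigr|\le A\Bigl\{\Bigl(\frac{\Lambda^2}{\lambda}\Bigr)^{1/2}+2(\lambda Y^2)^{-1/2}\Bigr\}, \] where $A=\frac{2}{\sqrt\pi}\bigl(1+\sqrt{1+3\pi/8}\bigr)=2.79368\ldots$.
   Context: $e(x)=e^{2\pi i x}$; the sum runs over integers $n$. *)

From Stdlib Require Import Reals List ZArith.
From Coquelicot Require Import Coquelicot.
Open Scope R_scope.

Definition e (x : R) : C := (cos (2 * PI * x), sin (2 * PI * x)).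

(* Sum over the integers n with X < n <= X + Y of g n.
   Int_part r is floor r, and up r = floor r + 1 is the least integer > r,
   so these integers are up X, up X + 1, ..., Int_part (X + Y). *)
Definition sum_int_range (X Y : R) (g : Z -> C) : C :=
  let N := Z.to_nat (Int_part (X + Y) - up X + 1) in
  fold_right (fun k acc => Cplus (g (up X + Z.of_nat k)%Z) acc) (RtoC 0)
             (seq 0 N).

Definition Ioc (a b : R) (x : R) : Prop := a < x <= b.

Definition deriv_within (D : R -> Prop) (f : R -> R) (x l : R) : Prop :=
  limit1_in (fun y => (f y - f x) / (y - x)) (fun y => D y /\ y <> x) l x.

Definition cont_within (D : R -> Prop) (g : R -> R) (x : R) : Prop :=
  limit1_in g D (g x) x.

Definition A_const : R := 2 / sqrt PI * (1 + sqrt (1 + 3 * PI / 8)).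

(* The second differences of k |-> f(x0 + k) lie in [lam, Lam] by the mean value theorem,
   so the first differences d k grow by at least lam per step. Cut the sum into blocks on
   which floor (d k + del) is constant; there are at most Lam Y + 2 of them. In a block, the
   terms whose d k lies within del of the integer are at most 2 del / lam + 1 in number; on
   the others d k is monotone and stays in [del, 1 - del] modulo 1, so the Kusmin-Landau
   inequality (summation by parts) bounds them by cot (PI del / 2) <= 2 / (PI del). With
   del = sqrt lam / 2 a block costs at most (1 + sqrt lam + 4 / PI) / sqrt lam, and
   1 + 4 / PI < A leaves room for the boundary terms. When A sqrt lam >= 1 or Y <= 14 the trivial bound Y + 1 already suffices. *)

From Stdlib Require Import Reals List ZArith Lra Lia Psatz.
From Coquelicot Require Import Coquelicot.
Open Scope R_scope.

Fixpoint csum (h : nat -> C) (a n : nat) : C :=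
  match n with O => RtoC 0 | S n => Cplus (h a) (csum h (S a) n) end.

Lemma fold_right_seq_csum (h : nat -> C) (a n : nat) :
  fold_right (fun k acc => Cplus (h k) acc) (RtoC 0) (seq a n) = csum h a n.
Proof. revert a; induction n as [|n IH]; intros a; simpl; [reflexivity | now rewrite IH]. Qed.

Lemma csum_ext (h1 h2 : nat -> C) (a n : nat) :
  (forall k, h1 k = h2 k) -> csum h1 a n = csum h2 a n.
Proof.
  intros H; revert a; induction n as [|n IH]; intros a; simpl; [reflexivity | now rewrite H, IH].
Qed.

Lemma csum_add (h : nat -> C) (n m a : nat) :
  csum h a (n + m) = Cplus (csum h a n) (csum h (a + n) m).
Proof.
  revert a; induction n as [|n IH]; intros a; simpl.
  - now rewrite Nat.add_0_r, Cplus_0_l.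
  - rewrite IH, Cplus_assoc. now replace (S a + n)%nat with (a + S n)%nat by lia.
Qed.

Lemma csum_Sr (h : nat -> C) (a n : nat) :
  csum h a (S n) = Cplus (csum h a n) (h (a + n)%nat).
Proof.
  replace (S n) with (n + 1)%nat by lia. rewrite csum_add. simpl.
  now rewrite Cplus_0_r.
Qed.

Lemma Cmod_csum_le (h : nat -> C) (a n : nat) :
  (forall k, Cmod (h k) <= 1) -> Cmod (csum h a n) <= INR n.
Proof.
  intros H; revert a; induction n as [|n IH]; intros a; cbn [csum].
  - rewrite Cmod_0; simpl; lra.
  - eapply Rle_trans; [apply Cmod_triangle |].
    rewrite S_INR. specialize (IH (S a)). specialize (H a). lra.
Qed.

Lemma e_add (x y : R) : e (x + y) = Cmult (e x) (e y).
Proof.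
  unfold e, Cmult; simpl. replace (2 * PI * (x + y)) with (2 * PI * x + 2 * PI * y) by ring.
  rewrite cos_plus, sin_plus. f_equal; ring.
Qed.

Lemma Cmod_e (x : R) : Cmod (e x) = 1.
Proof.
  unfold Cmod, e; simpl. pose proof (sin2_cos2 (2 * PI * x)) as H. unfold Rsqr in H.
  rewrite !Rmult_1_r, <- sqrt_1. f_equal. lra.
Qed.

Lemma e_add_int (x : R) (z : Z) : e (x + IZR z) = e x.
Proof.
  rewrite e_add. assert (Hs : sin (PI * IZR z) = 0) by (apply sin_eq_0_1; exists z; ring).
  unfold e at 2. replace (2 * PI * IZR z) with (2 * (PI * IZR z)) by ring.
  rewrite cos_2a_sin, sin_2a, Hs. destruct (e x) as [a b]. unfold Cmult; simpl. f_equal; ring.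
Qed.

Lemma Cmod_imag (y : R) : Cmod (0, y) = Rabs y.
Proof. unfold Cmod; simpl. rewrite <- sqrt_Rsqr_abs. unfold Rsqr. f_equal. ring. Qed.

Definition cot (t : R) : R := cos t / sin t.

Lemma cot_antitone (a b : R) : 0 < a -> a <= b -> b < PI -> cot b <= cot a.
Proof.
  intros Ha Hab Hb. unfold cot.
  assert (sa : 0 < sin a) by (apply sin_gt_0; lra).
  assert (sb : 0 < sin b) by (apply sin_gt_0; lra).
  assert (Hs : 0 <= sin (b - a)) by (apply sin_ge_0; lra).
  rewrite sin_minus in Hs.
  apply Rmult_le_reg_r with (sin a * sin b); [nra |].
  replace (cos b / sin b * (sin a * sin b)) with (cos b * sin a) by (field; lra).
  replace (cos a / sin a * (sin a * sin b)) with (cos a * sin b) by (field; lra).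
  lra.
Qed.

Lemma Rabs_cot_le (a t : R) : 0 < a -> a <= t <= PI - a -> Rabs (cot t) <= cot a.
Proof.
  intros Ha Ht. pose proof PI_RGT_0.
  apply Rabs_le; split.
  - assert (E : - cot a = cot (PI - a)).
    { unfold cot. rewrite sin_PI_x, Rtrigo_facts.cos_pi_minus. unfold Rdiv; ring. }
    rewrite E. apply cot_antitone; lra.
  - apply cot_antitone; lra.
Qed.

Section Kusmin_Landau.

Variables (phi : nat -> R) (K : Z) (del : R).
Hypothesis del_pos : 0 < del.

Let u k := e (phi k).
Let dd k := phi (S k) - phi k - IZR K.
(* c k = 1 / (e (dd k) - 1) *)
Let c k : C := (-1/2, - cot (PI * dd k) / 2).

Lemma term_eq_c_mul_diff k : 0 < dd k < 1 -> u k = Cmult (c k) (Cminus (u (S k)) (u k)).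
Proof.
  intros Hk. pose proof PI_RGT_0.
  assert (sp : 0 < sin (PI * dd k)) by (apply sin_gt_0; nra).
  assert (HE : u (S k) = Cmult (u k) (e (dd k))).
  { unfold u. replace (phi (S k)) with ((phi k + dd k) + IZR K) by (unfold dd; ring).
    now rewrite e_add_int, e_add. }
  assert (Hc : Cmult (c k) (Cminus (e (dd k)) 1) = 1).
  { unfold c, cot, e. replace (2 * PI * dd k) with (2 * (PI * dd k)) by ring.
    rewrite cos_2a_sin, sin_2a. unfold Cmult, Cminus, Cplus, Copp, RtoC; simpl.
    pose proof (sin2_cos2 (PI * dd k)) as H1. unfold Rsqr in H1.
    f_equal; field_simplify; try lra; nra. }
  rewrite HE.
  replace (Cminus (Cmult (u k) (e (dd k))) (u k)) with (Cmult (u k) (Cminus (e (dd k)) 1)) by ring.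
  replace (Cmult (c k) (Cmult (u k) (Cminus (e (dd k)) 1)))
    with (Cmult (u k) (Cmult (c k) (Cminus (e (dd k)) 1))) by ring.
  rewrite Hc. ring.
Qed.

Lemma Cmod_c_le k : del <= dd k <= 1 - del -> Cmod (c k) <= 1 / (2 * sin (PI * del)).
Proof.
  intros Hk. pose proof PI_RGT_0.
  assert (sp : 0 < sin (PI * del)) by (apply sin_gt_0; nra).
  assert (Hg : Rabs (cot (PI * dd k)) <= cot (PI * del)) by (apply Rabs_cot_le; nra).
  assert (Hg2 : cot (PI * dd k) ^ 2 <= cot (PI * del) ^ 2).
  { rewrite <- (pow2_abs (cot (PI * dd k))). pose proof (Rabs_pos (cot (PI * dd k))). nra. }
  unfold Cmod, c; simpl.
  rewrite <- (sqrt_pow2 (1 / (2 * sin (PI * del)))) by (apply Rlt_le, Rdiv_lt_0_compat; lra).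
  apply sqrt_le_1_alt.
  assert (E : (1 / (2 * sin (PI * del))) ^ 2 = 1/4 + cot (PI * del) ^ 2 / 4).
  { unfold cot. pose proof (sin2_cos2 (PI * del)) as H1. unfold Rsqr in H1.
    field_simplify; try lra.
    replace (sin (PI * del) ^ 2) with (1 - cos (PI * del) ^ 2) by nra. field. nra. }
  rewrite E. nra.
Qed.

Section Range.

Variables (p n : nat).
Hypothesis dd_range : forall k, (p <= k <= p + n)%nat -> del <= dd k <= 1 - del.
Hypothesis dd_mono : forall k, (p <= k < p + n)%nat -> dd k <= dd (S k).

(* Summation by parts: the differences c k - c (S k) are purely imaginary and of
   constant sign, so their moduli telescope. *)
Lemma Cmod_csum_sub_boundary j : (j <= n)%nat ->
  Cmod (Cminus (csum u p (S j)) (Cmult (c (p + j)%nat) (u (S (p + j)))))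
  <= Cmod (c p) + (cot (PI * dd p) - cot (PI * dd (p + j)%nat)) / 2.
Proof.
  pose proof PI_RGT_0.
  assert (Cmod_u : forall k, Cmod (u k) = 1) by (intros; apply Cmod_e).
  assert (Hterm : forall k, (p <= k <= p + n)%nat ->
            Cminus (u k) (Cmult (c k) (u (S k))) = Copp (Cmult (c k) (u k))).
  { intros k Hk. specialize (dd_range k Hk).
    rewrite (term_eq_c_mul_diff k) at 1 by lra. ring. }
  induction j as [|j IH]; intros Hj.
  - rewrite Nat.add_0_r. simpl. rewrite Cplus_0_r, Hterm by lia.
    rewrite Cmod_opp, Cmod_mult, Cmod_u. lra.
  - rewrite csum_Sr. replace (S (p + S j)) with (S (S (p + j))) by lia.
    replace (p + S j)%nat with (S (p + j)) by lia.
    set (k := (p + j)%nat) in *.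
    replace (Cminus (Cplus (csum u p (S j)) (u (S k))) (Cmult (c (S k)) (u (S (S k)))))
      with (Cplus (Cplus (Cminus (csum u p (S j)) (Cmult (c k) (u (S k))))
                         (Cmult (Cminus (c k) (c (S k))) (u (S k))))
                  (Cplus (Cmult (c (S k)) (u (S k)))
                         (Cminus (u (S k)) (Cmult (c (S k)) (u (S (S k))))))) by ring.
    rewrite Hterm, Cplus_opp_r, Cplus_0_r by lia.
    eapply Rle_trans; [apply Cmod_triangle |].
    rewrite Cmod_mult, Cmod_u.
    assert (E : Cminus (c k) (c (S k)) = (0, (cot (PI * dd (S k)) - cot (PI * dd k)) / 2)).
    { unfold c, Cminus, Cplus, Copp; simpl. f_equal; field. }
    assert (Hmono : cot (PI * dd (S k)) <= cot (PI * dd k)).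
    { assert (H1 := dd_range k ltac:(lia)). assert (H2 := dd_range (S k) ltac:(lia)).
      assert (H3 := dd_mono k ltac:(lia)). apply cot_antitone; nra. }
    rewrite E, Cmod_imag, Rabs_left1 by lra.
    specialize (IH ltac:(lia)). lra.
Qed.

Lemma kusmin_landau :
  Cmod (csum u p (S n)) <= (1 + cos (PI * del)) / sin (PI * del).
Proof.
  pose proof PI_RGT_0.
  assert (H1 := dd_range p ltac:(lia)). assert (H2 := dd_range (p + n)%nat ltac:(lia)).
  assert (sp : 0 < sin (PI * del)) by (apply sin_gt_0; nra).
  assert (Cmod_u : forall k, Cmod (u k) = 1) by (intros; apply Cmod_e).
  assert (Cl := Cmod_csum_sub_boundary n (le_n n)).
  replace (csum u p (S n))
    with (Cplus (Cminus (csum u p (S n)) (Cmult (c (p + n)%nat) (u (S (p + n)))))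
                (Cmult (c (p + n)%nat) (u (S (p + n))))) by ring.
  eapply Rle_trans; [apply Cmod_triangle |].
  rewrite Cmod_mult, Cmod_u.
  assert (C1 := Cmod_c_le p H1). assert (C2 := Cmod_c_le (p + n)%nat H2).
  assert (G1 : Rabs (cot (PI * dd p)) <= cot (PI * del)) by (apply Rabs_cot_le; nra).
  assert (G2 : Rabs (cot (PI * dd (p + n)%nat)) <= cot (PI * del)) by (apply Rabs_cot_le; nra).
  apply Rabs_le_between in G1. apply Rabs_le_between in G2.
  replace ((1 + cos (PI * del)) / sin (PI * del))
    with (1 / (2 * sin (PI * del)) + 1 / (2 * sin (PI * del)) + cot (PI * del))
    by (unfold cot; field; lra).
  lra.
Qed.

End Range.
End Kusmin_Landau.

Lemma one_plus_cos_div_sin_nonneg (x : R) : 0 < x < PI -> 0 <= (1 + cos x) / sin x.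
Proof.
  intros Hx. apply Rdiv_le_0_compat.
  - pose proof (COS_bound x). lra.
  - apply sin_gt_0; lra.
Qed.

Lemma threshold_split (d : nat -> R) (a n : nat) (t : R) :
  (forall k i, (a <= k <= i)%nat -> (i < a + n)%nat -> d k <= d i) ->
  exists j, (j <= n)%nat /\ (forall k, (a <= k < a + j)%nat -> d k < t) /\
            (forall k, (a + j <= k < a + n)%nat -> t <= d k).
Proof.
  induction n as [|n IH]; intros Hmono.
  - exists 0%nat. repeat split; intros; lia.
  - destruct IH as [j [Hj [Hlo Hhi]]]; [intros k i Hk Hi; apply Hmono; lia |].
    destruct (Rlt_or_le (d (a + n)%nat) t) as [Hlt | Hge].
    + exists (S n). repeat split; [lia | | intros; lia].
      intros k Hk. apply Rle_lt_trans with (d (a + n)%nat); [apply Hmono; lia | exact Hlt].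
    + exists j. repeat split; [lia | exact Hlo |].
      intros k Hk. destruct (Nat.eq_dec k (a + n)) as [-> | Hne]; [exact Hge | apply Hhi; lia].
Qed.

Section Blocks.

Variables (phi : nat -> R) (lam del : R) (m : nat).
Hypotheses (lam_pos : 0 < lam) (del_range : 0 < del <= 1/2).

Let u k := e (phi k).
Let d k := phi (S k) - phi k.
Hypothesis d_step : forall k, (S k < m)%nat -> lam <= d (S k) - d k.

Let B := 2 * del / lam + 1 + (1 + cos (PI * del)) / sin (PI * del).

Lemma block_const_nonneg : 0 <= B.
Proof.
  pose proof PI_RGT_0.
  assert (0 <= 2 * del / lam) by (apply Rdiv_le_0_compat; lra).
  assert (0 <= (1 + cos (PI * del)) / sin (PI * del)) by (apply one_plus_cos_div_sin_nonneg; nra).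
  unfold B; lra.
Qed.

Lemma d_grow a j : (a + j < m)%nat -> INR j * lam <= d (a + j)%nat - d a.
Proof.
  induction j as [|j IH]; intros H.
  - rewrite Nat.add_0_r. simpl. lra.
  - rewrite S_INR. replace (a + S j)%nat with (S (a + j)) by lia.
    specialize (d_step (a + j)%nat ltac:(lia)). specialize (IH ltac:(lia)). lra.
Qed.

Lemma d_le k i : (k <= i < m)%nat -> d k <= d i.
Proof.
  intros Hki. replace i with (k + (i - k))%nat by lia.
  pose proof (d_grow k (i - k) ltac:(lia)). pose proof (pos_INR (i - k)). nra.
Qed.

(* Consecutive d k differ by at least lam, so a window of width w holds at most
   w / lam + 1 of them. *)
Lemma Cmod_csum_window a n t w : (a + n <= m)%nat -> 0 <= w ->
  (forall k, (a <= k < a + n)%nat -> t <= d k < t + w) ->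
  Cmod (csum u a n) <= w / lam + 1.
Proof.
  intros Hm Hw Hk. eapply Rle_trans; [apply Cmod_csum_le; intros; right; apply Cmod_e |].
  assert (0 <= w / lam) by (apply Rdiv_le_0_compat; lra).
  destruct n as [|n]; [simpl; lra |].
  assert (H1 := d_grow a n ltac:(lia)).
  assert (H2 := Hk a ltac:(lia)). assert (H3 := Hk (a + n)%nat ltac:(lia)).
  assert (INR n < w / lam).
  { apply Rmult_lt_reg_r with lam; [lra |]. unfold Rdiv. rewrite Rmult_assoc, Rinv_l; lra. }
  rewrite S_INR. lra.
Qed.

(* Within a block d k runs through [K - del, K + 1 - del): near K it is estimated by the
   window bound, beyond K + del by Kusmin-Landau. *)
Lemma Cmod_csum_block a n K : (a + n <= m)%nat ->
  (forall k, (a <= k < a + n)%nat -> IZR K <= d k + del < IZR K + 1) ->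
  Cmod (csum u a n) <= B.
Proof.
  intros Hm Hk.
  destruct (threshold_split d a n (IZR K + del)) as [j [Hj [Hlo Hhi]]].
  { intros k i Hki Hi. apply d_le; lia. }
  replace n with (j + (n - j))%nat by lia. rewrite csum_add.
  eapply Rle_trans; [apply Cmod_triangle |].
  assert (N1 : Cmod (csum u a j) <= 2 * del / lam + 1).
  { apply (Cmod_csum_window a j (IZR K - del)); [lia | lra |].
    intros k Hk'. specialize (Hk k ltac:(lia)). specialize (Hlo k Hk'). lra. }
  assert (N2 : Cmod (csum u (a + j) (n - j)) <= (1 + cos (PI * del)) / sin (PI * del)).
  { destruct (n - j)%nat as [|n'] eqn:E.
    - simpl. rewrite Cmod_0. pose proof PI_RGT_0.
      apply one_plus_cos_div_sin_nonneg; nra.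
    - apply (kusmin_landau phi K del); [lra | |].
      + intros k Hk'. specialize (Hk k ltac:(lia)). specialize (Hhi k ltac:(lia)).
        fold (d k). lra.
      + intros k Hk'. fold (d k) (d (S k)). assert (d k <= d (S k)) by (apply d_le; lia). lra. }
  unfold B. lra.
Qed.

Let kap k := Int_part (d k + del).

Lemma kap_spec k : IZR (kap k) <= d k + del < IZR (kap k) + 1.
Proof. unfold kap. destruct (base_Int_part (d k + del)). lra. Qed.

Lemma kap_le k : (S k < m)%nat -> (kap k <= kap (S k))%Z.
Proof.
  intros Hk. assert (d k <= d (S k)) by (apply d_le; lia).
  pose proof (kap_spec k). pose proof (kap_spec (S k)).
  assert (Hlt : IZR (kap k) < IZR (kap (S k) + 1)) by (rewrite plus_IZR; lra).
  apply lt_IZR in Hlt. lia.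
Qed.

Lemma Cmod_csum_last_block s n : (S n <= m)%nat -> (s <= n)%nat ->
  (forall k, (s <= k <= n)%nat -> kap k = kap n) ->
  Cmod (csum u s (S n - s)) <= B.
Proof.
  intros Hm Hs Hconst. apply (Cmod_csum_block s (S n - s) (kap n)); [lia |].
  intros k Hk. rewrite <- (Hconst k ltac:(lia)). apply kap_spec.
Qed.

(* Each completed block raises kap by at least one. *)
Lemma last_block_split n : (S n <= m)%nat ->
  exists s, (s <= n)%nat /\ (forall k, (s <= k <= n)%nat -> kap k = kap n) /\
     Cmod (csum u 0 s) <= B * IZR (kap n - kap 0).
Proof.
  induction n as [|n IH]; intros Hm.
  - exists 0%nat. split; [lia |]. split; [intros k Hk; f_equal; lia |].
    simpl. rewrite Cmod_0, Z.sub_diag. simpl. lra.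
  - destruct (IH ltac:(lia)) as [s [Hs [Hconst Hsum]]].
    assert (Hmono := kap_le n ltac:(lia)).
    destruct (Z.eq_dec (kap (S n)) (kap n)) as [E | E].
    + exists s. split; [lia |]. split; [| now rewrite E].
      intros k Hk. destruct (Nat.eq_dec k (S n)) as [-> | ]; [reflexivity |].
      rewrite E. apply Hconst; lia.
    + exists (S n). split; [lia |]. split; [intros k Hk; f_equal; lia |].
      replace (S n) with (s + (S n - s))%nat at 1 by lia. rewrite csum_add, Nat.add_0_l.
      eapply Rle_trans; [apply Cmod_triangle |].
      assert (Hblock := Cmod_csum_last_block s n ltac:(lia) Hs Hconst).
      assert (IZR (kap n - kap 0) + 1 <= IZR (kap (S n) - kap 0)).
      { rewrite <- plus_IZR. apply IZR_le. lia. }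
      pose proof block_const_nonneg. nra.
Qed.

Lemma Cmod_csum_blocks n : (S n <= m)%nat ->
  Cmod (csum u 0 (S n)) <= B * (d n - d 0 + 2).
Proof.
  intros Hm. destruct (last_block_split n Hm) as [s [Hs [Hconst Hsum]]].
  replace (S n) with (s + (S n - s))%nat at 1 by lia. rewrite csum_add, Nat.add_0_l.
  eapply Rle_trans; [apply Cmod_triangle |].
  assert (Hblock := Cmod_csum_last_block s n Hm Hs Hconst).
  assert (IZR (kap n - kap 0) <= d n - d 0 + 1).
  { rewrite minus_IZR. pose proof (kap_spec n). pose proof (kap_spec 0). lra. }
  pose proof block_const_nonneg. nra.
Qed.

End Blocks.

Lemma second_difference_test (phi : nat -> R) (lam Lam del : R) (n : nat) :
  0 < lam -> 0 < del <= 1/2 ->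
  (forall k, (k < n)%nat -> lam <= phi (S (S k)) - 2 * phi (S k) + phi k <= Lam) ->
  Cmod (csum (fun k => e (phi k)) 0 (S n))
  <= (2 * del / lam + 1 + (1 + cos (PI * del)) / sin (PI * del)) * (INR n * Lam + 2).
Proof.
  intros Hlam Hdel Hsd.
  set (d k := phi (S k) - phi k).
  assert (Hstep : forall k, (S k < S n)%nat -> lam <= d (S k) - d k).
  { intros k Hk. specialize (Hsd k ltac:(lia)). unfold d. lra. }
  assert (Hgrow : forall j, (j <= n)%nat -> d j - d 0%nat <= INR j * Lam).
  { induction j as [|j IH]; intros Hj; [simpl; lra |].
    rewrite S_INR. specialize (Hsd j ltac:(lia)). specialize (IH ltac:(lia)). unfold d in *. lra. }
  eapply Rle_trans; [exact (Cmod_csum_blocks phi lam del (S n) Hlam Hdel Hstep n (le_n _)) |].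
  apply Rmult_le_compat_l; [exact (block_const_nonneg lam del Hlam Hdel) |].
  specialize (Hgrow n (le_n n)). unfold d in Hgrow. lra.
Qed.

Lemma derivable_pt_lim_of_deriv_within (a b : R) (f : R -> R) (x l : R) :
  a < x < b -> deriv_within (Ioc a b) f x l -> derivable_pt_lim f x l.
Proof.
  intros Hx H eps Heps. destruct (H eps Heps) as [alp [Halp Hc]].
  set (r := Rmin alp (Rmin (x - a) (b - x))).
  assert (Hr : 0 < r) by (apply Rmin_pos; [lra | apply Rmin_pos; lra]).
  exists (mkposreal r Hr). intros h Hh0 Hh. simpl in Hh.
  assert (r <= alp) by apply Rmin_l.
  assert (r <= x - a) by (eapply Rle_trans; [apply Rmin_r | apply Rmin_l]).
  assert (r <= b - x) by (eapply Rle_trans; [apply Rmin_r | apply Rmin_r]).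
  specialize (Hc (x + h)). simpl in Hc. unfold R_dist in Hc.
  replace (x + h - x) with h in Hc by ring.
  apply Hc. apply Rabs_def2 in Hh. split; [split |].
  - unfold Ioc. lra.
  - lra.
  - apply Rabs_def1; lra.
Qed.

Lemma derivable_pt_lim_shift (f : R -> R) (s x l : R) :
  derivable_pt_lim f (s + x) l -> derivable_pt_lim (fun t => f (s + t)) x l.
Proof.
  intros H eps Heps. destruct (H eps Heps) as [del Hd]. exists del. intros h H1 H2.
  replace (s + (x + h)) with (s + x + h) by ring. now apply Hd.
Qed.

(* Two applications of the mean value theorem:
   f(x+2) - 2f(x+1) + f(x) = f'(x+c+1) - f'(x+c) = f''(xi). *)
Lemma second_difference_bounds (f f1 f2 : R -> R) (a b lam Lam x : R) :
  (forall y, a < y < b -> derivable_pt_lim f y (f1 y)) ->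
  (forall y, a < y < b -> derivable_pt_lim f1 y (f2 y)) ->
  (forall y, a < y < b -> lam <= f2 y <= Lam) ->
  a < x -> x + 2 < b ->
  lam <= f (x + 2) - 2 * f (x + 1) + f x <= Lam.
Proof.
  intros Df Df1 Hf2 Ha Hb.
  set (g t := f (x + 1 + t) - f (x + t)).
  set (g' t := f1 (x + 1 + t) - f1 (x + t)).
  assert (Dg : forall t, 0 <= t <= 1 -> derivable_pt_lim g t (g' t)).
  { intros t Ht. apply (derivable_pt_lim_minus (fun t => f (x + 1 + t)) (fun t => f (x + t)));
      apply derivable_pt_lim_shift, Df; lra. }
  destruct (MVT_cor2 g g' 0 1 ltac:(lra) Dg) as [c [Hc Hc01]].
  assert (Df1' : forall y, x + c <= y <= x + 1 + c -> derivable_pt_lim f1 y (f2 y))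
    by (intros y Hy; apply Df1; lra).
  destruct (MVT_cor2 f1 f2 (x + c) (x + 1 + c) ltac:(lra) Df1') as [xi [Hxi Hxi_range]].
  specialize (Hf2 xi ltac:(lra)).
  unfold g, g' in Hc.
  replace (x + 1 + 1) with (x + 2) in Hc by ring.
  replace (x + 1 + 0) with (x + 1) in Hc by ring.
  replace (x + 0) with x in Hc by ring.
  replace (x + 1 + c - (x + c)) with 1 in Hxi by ring.
  lra.
Qed.

Lemma INR_fact_IZR (n : nat) (z : Z) : Z.of_nat (fact n) = z -> INR (fact n) = IZR z.
Proof. intros H. now rewrite INR_IZR_INZ, H. Qed.

Lemma cos_ub_eq (y : R) : cos_ub y = 1 - y^2/2 + y^4/24 - y^6/720 + y^8/40320.
Proof.
  unfold cos_ub, cos_approx, cos_term. cbn [sum_f_R0].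
  rewrite (INR_fact_IZR (2*0) 1), (INR_fact_IZR (2*1) 2), (INR_fact_IZR (2*2) 24),
    (INR_fact_IZR (2*3) 720), (INR_fact_IZR (2*4) 40320) by (vm_compute; reflexivity).
  simpl Nat.mul. field.
Qed.

Lemma cos_lb_eq (y : R) : cos_lb y = 1 - y^2/2 + y^4/24 - y^6/720.
Proof.
  unfold cos_lb, cos_approx, cos_term. cbn [sum_f_R0].
  rewrite (INR_fact_IZR (2*0) 1), (INR_fact_IZR (2*1) 2), (INR_fact_IZR (2*2) 24),
    (INR_fact_IZR (2*3) 720) by (vm_compute; reflexivity).
  simpl Nat.mul. field.
Qed.

Lemma sin_lb_eq (y : R) : sin_lb y = y - y^3/6 + y^5/120 - y^7/5040.
Proof.
  unfold sin_lb, sin_approx, sin_term. cbn [sum_f_R0].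
  rewrite (INR_fact_IZR (2*0+1) 1), (INR_fact_IZR (2*1+1) 6), (INR_fact_IZR (2*2+1) 120),
    (INR_fact_IZR (2*3+1) 5040) by (vm_compute; reflexivity).
  simpl Nat.mul. simpl Nat.add. field.
Qed.

(* If PI <= 3.1, the Taylor lower bound for cos (PI / 2) = 0 would be positive. *)
Lemma PI_gt_3_1 : 3.1 < PI.
Proof.
  destruct (Rlt_or_le 3.1 PI) as [H | H]; [exact H | exfalso].
  pose proof PI2_3_2.
  destruct (COS (PI / 2)) as [C _]; try lra.
  rewrite cos_PI2, cos_lb_eq in C.
  set (z := (PI / 2) ^ 2) in *.
  assert (2.25 <= z <= 2.4025) by (unfold z; split; nra).
  replace ((PI / 2) ^ 4) with (z ^ 2) in C by (unfold z; ring).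
  replace ((PI / 2) ^ 6) with (z ^ 3) in C by (unfold z; ring).
  nra.
Qed.

(* The Taylor upper bound gives cos 1.6 < 0, whereas PI >= 3.2 would force cos 1.6 >= 0. *)
Lemma PI_lt_3_2 : PI < 3.2.
Proof.
  destruct (Rlt_or_le PI 3.2) as [H | H]; [exact H | exfalso].
  assert (0 <= cos 1.6) by (apply cos_ge_0; lra).
  destruct (COS 1.6) as [_ C]; try lra.
  rewrite cos_ub_eq in C. lra.
Qed.

Lemma one_plus_cos_div_sin_le (x : R) : 0 < x <= 0.6 -> (1 + cos x) / sin x <= 2 / x.
Proof.
  intros Hx. pose proof PI_gt_3_1.
  destruct (COS x) as [_ C]; try lra.
  destruct (SIN x) as [S _]; try lra.
  rewrite cos_ub_eq in C. rewrite sin_lb_eq in S.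
  assert (Hsin : 0 < sin x) by (apply sin_gt_0; lra).
  assert (Hpoly : x * (1 + (1 - x^2/2 + x^4/24 - x^6/720 + x^8/40320))
                  <= 2 * (x - x^3/6 + x^5/120 - x^7/5040)).
  { set (z := x ^ 2).
    assert (Hz : 0 < z <= 0.36) by (unfold z; split; nra).
    assert (P : 0 <= 1/6 - z/40 + z^2 * (1/720 - 1/2520) - z^3/40320) by nra.
    assert (0 <= x * z * (1/6 - z/40 + z^2 * (1/720 - 1/2520) - z^3/40320))
      by (apply Rmult_le_pos; nra).
    unfold z in *. nra. }
  apply Rmult_le_reg_r with (x * sin x); [nra |].
  replace ((1 + cos x) / sin x * (x * sin x)) with (x * (1 + cos x)) by (field; lra).
  replace (2 / x * (x * sin x)) with (2 * sin x) by (field; lra).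
  nra.
Qed.

Lemma A_const_ge : 2.76 <= A_const.
Proof.
  pose proof PI_gt_3_1. pose proof PI_lt_3_2. unfold A_const.
  assert (S1 : sqrt PI <= 1.78886).
  { rewrite <- (sqrt_pow2 1.78886) by lra. apply sqrt_le_1_alt. lra. }
  assert (S0 : 0 < sqrt PI) by (apply sqrt_lt_R0; lra).
  assert (S2 : 1.4705 <= sqrt (1 + 3 * PI / 8)).
  { rewrite <- (sqrt_pow2 1.4705) by lra. apply sqrt_le_1_alt. lra. }
  assert (1.118 <= 2 / sqrt PI).
  { apply Rmult_le_reg_r with (sqrt PI); [lra |].
    unfold Rdiv. rewrite Rmult_assoc, Rinv_l; lra. }
  nra.
Qed.

Lemma trivial_case_le (s Lam Y : R) :
  0 < s -> s ^ 2 <= Lam -> 1 <= Y -> (1 <= A_const * s \/ Y <= 14) ->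
  Y + 1 <= A_const * (Lam * Y + 2) / s.
Proof.
  intros Hs HLam HY Hcase. pose proof A_const_ge as HA.
  apply Rmult_le_reg_r with s; [lra |].
  replace (A_const * (Lam * Y + 2) / s * s) with (A_const * (Lam * Y + 2)) by (field; lra).
  assert (A_const * s ^ 2 * Y <= A_const * Lam * Y) by (apply Rmult_le_compat_r; nra).
  destruct (Rle_or_lt 1 (A_const * s)) as [Hbig | Hsmall].
  - assert (Hsy : 0 <= (A_const * s - 1) * (s * Y)) by (apply Rmult_le_pos; nra).
    destruct (Rle_or_lt s (2 * A_const)); [nra |].
    assert (0 <= (A_const * s - 2) * (s * Y)) by (apply Rmult_le_pos; nra).
    nra.
  - destruct Hcase as [| HY14]; [lra |].
    assert (15 * s <= 2 * A_const).
    { apply Rmult_le_reg_r with A_const; nra. }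
    assert ((Y + 1) * s <= 15 * s) by (apply Rmult_le_compat_r; lra).
    assert (0 <= A_const * s ^ 2 * Y) by (apply Rmult_le_pos; nra).
    nra.
Qed.

Lemma block_const_le (s : R) : 0 < s -> A_const * s < 1 ->
  2 * (s / 2) / s ^ 2 + 1 + (1 + cos (PI * (s / 2))) / sin (PI * (s / 2)) <= (1 + s + 4 / PI) / s.
Proof.
  intros Hs HAs. pose proof A_const_ge. pose proof PI_gt_3_1. pose proof PI_lt_3_2.
  assert (Hx : 0 < PI * (s / 2) <= 0.6) by (split; nra).
  pose proof (one_plus_cos_div_sin_le _ Hx) as Hcot.
  replace (2 / (PI * (s / 2))) with (4 / PI / s) in Hcot by (field; lra).
  replace ((1 + s + 4 / PI) / s) with (1 / s + 1 + 4 / PI / s) by (field; lra).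
  replace (2 * (s / 2) / s ^ 2) with (1 / s) by (field; lra).
  lra.
Qed.

Lemma main_case_le (s Lam Y n : R) :
  0 < s -> A_const * s < 1 -> s ^ 2 <= Lam -> 14 < Y -> 0 <= n <= Y - 2 ->
  (1 + s + 4 / PI) / s * (n * Lam + 2) + 2 <= A_const * (Lam * Y + 2) / s.
Proof.
  intros Hs HAs HLam HY Hn. pose proof A_const_ge as HA.
  pose proof PI_gt_3_1. pose proof PI_lt_3_2.
  assert (Hq : 1.25 <= 4 / PI <= 1.2904).
  { split; apply Rmult_le_reg_r with PI; try lra; unfold Rdiv; rewrite Rmult_assoc, Rinv_l; lra. }
  set (q := 4 / PI) in *.
  (* A - 1 - q >= 0.4696 and s < 1 / A < 0.3624, on which
     (14 s^2 + 2) (0.4696 - s) + 4.5 s^2 - 2 s stays positive. *)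
  assert (Hs1 : s < 0.3624) by nra.
  assert (n * Lam <= (Y - 2) * Lam) by (apply Rmult_le_compat_r; nra).
  apply Rmult_le_reg_r with s; [lra |].
  replace (((1 + s + q) / s * (n * Lam + 2) + 2) * s) with ((1 + s + q) * (n * Lam + 2) + 2 * s)
    by (field; lra).
  replace (A_const * (Lam * Y + 2) / s * s) with (A_const * (Lam * Y + 2)) by (field; lra).
  assert (H2 : 14 * s^2 + 2 <= Lam * Y + 2) by nra.
  assert (H3 : (14 * s^2 + 2) * (0.4696 - s) <= (Lam * Y + 2) * (A_const - 1 - s - q))
    by (apply Rmult_le_compat; nra).
  assert (H4 : 4.5 * s^2 <= 2 * Lam * (1 + s + q)) by nra.
  assert (H5 : 0 <= (14 * s^2 + 2) * (0.4696 - s) + 4.5 * s^2 - 2 * s) by nra.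
  nra.
Qed.

Definition range_count (X Y : R) : nat := Z.to_nat (Int_part (X + Y) - up X + 1).

Lemma sum_int_range_csum (X Y : R) (h : R -> C) :
  sum_int_range X Y (fun n => h (IZR n))
  = csum (fun k => h (IZR (up X) + INR k)) 0 (range_count X Y).
Proof.
  unfold sum_int_range, range_count. rewrite fold_right_seq_csum. apply csum_ext.
  intros k. now rewrite plus_IZR, <- INR_IZR_INZ.
Qed.

Lemma INR_range_count (X Y : R) : 0 <= Y ->
  INR (range_count X Y) = IZR (Int_part (X + Y)) - IZR (up X) + 1.
Proof.
  intros HY. destruct (archimed X). destruct (base_Int_part (X + Y)).
  assert (Hpos : (0 <= Int_part (X + Y) - up X + 1)%Z).
  { assert (Hgt : IZR (-1) < IZR (Int_part (X + Y) - up X + 1))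
      by (rewrite plus_IZR, minus_IZR; lra).
    apply lt_IZR in Hgt. lia. }
  unfold range_count. rewrite INR_IZR_INZ, Z2Nat.id by exact Hpos.
  rewrite plus_IZR, minus_IZR. ring.
Qed.

Lemma range_count_bounds (X Y : R) : 0 <= Y -> Y - 1 < INR (range_count X Y) < Y + 1.
Proof.
  intros HY. rewrite INR_range_count by exact HY.
  destruct (archimed X). destruct (base_Int_part (X + Y)). lra.
Qed.

(* k + 4 <= range_count X Y keeps the three points strictly inside (X, X + Y), where the
   one-sided derivatives are two-sided. *)
Lemma second_difference_at_integers (X Y : R) (f f1 f2 : R -> R) (lam Lam : R) (k : nat) :
  0 <= Y ->
  (forall x, Ioc X (X + Y) x -> deriv_within (Ioc X (X + Y)) f x (f1 x)) ->
  (forall x, Ioc X (X + Y) x -> deriv_within (Ioc X (X + Y)) f1 x (f2 x)) ->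
  (forall x, Ioc X (X + Y) x -> lam <= f2 x <= Lam) ->
  (k + 4 <= range_count X Y)%nat ->
  lam <= f (IZR (up X) + INR (S (S k))) - 2 * f (IZR (up X) + INR (S k)) + f (IZR (up X) + INR k)
      <= Lam.
Proof.
  intros HY Hf Hf1 Hf2 Hk.
  assert (HN := INR_range_count X Y HY).
  assert (Hk' : INR (k + 4) <= INR (range_count X Y)) by (apply le_INR; exact Hk).
  rewrite plus_INR in Hk'. simpl in Hk'.
  destruct (archimed X). destruct (base_Int_part (X + Y)). pose proof (pos_INR k).
  rewrite !S_INR.
  replace (IZR (up X) + (INR k + 1 + 1)) with (IZR (up X) + INR k + 2) by ring.
  replace (IZR (up X) + (INR k + 1)) with (IZR (up X) + INR k + 1) by ring.
  apply (second_difference_bounds f f1 f2 X (X + Y)); [| | | lra | lra].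
  - intros y Hy. apply (derivable_pt_lim_of_deriv_within X (X + Y)); [exact Hy |].
    apply Hf. unfold Ioc. lra.
  - intros y Hy. apply (derivable_pt_lim_of_deriv_within X (X + Y)); [exact Hy |].
    apply Hf1. unfold Ioc. lra.
  - intros y Hy. apply Hf2. unfold Ioc. lra.
Qed.

Lemma Cmod_csum_e_le (phi : nat -> R) (N : nat) (lam Lam Y : R) :
  0 < lam -> lam <= Lam -> 1 <= Y -> Y - 1 < INR N < Y + 1 ->
  (forall k, (k + 4 <= N)%nat -> lam <= phi (S (S k)) - 2 * phi (S k) + phi k <= Lam) ->
  Cmod (csum (fun k => e (phi k)) 0 N) <= A_const * (Lam * Y + 2) / sqrt lam.
Proof.
  intros Hlam HLam HY HN Hsd.
  set (s := sqrt lam).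
  assert (Hs : 0 < s) by (apply sqrt_lt_R0; lra).
  assert (Hs2 : s ^ 2 = lam) by (apply pow2_sqrt; lra).
  assert (Htriv : Cmod (csum (fun k => e (phi k)) 0 N) <= INR N)
    by (apply Cmod_csum_le; intros; right; apply Cmod_e).
  destruct (Rle_or_lt 1 (A_const * s)) as [Hbig | HAs];
    [| destruct (Rle_or_lt Y 14) as [HY14 | HY14]].
  1, 2: pose proof (trivial_case_le s Lam Y Hs ltac:(lra) HY ltac:(lra)); lra.
  assert (HN14 : (14 <= N)%nat).
  { destruct (le_lt_dec 14 N) as [| Hlt]; [assumption | exfalso].
    assert (INR N <= INR 13) by (apply le_INR; lia). simpl in *. lra. }
  set (n := (N - 3)%nat).
  assert (Hn : INR n = INR N - 3) by (unfold n; rewrite minus_INR by lia; simpl; lra).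
  replace N with (S n + 2)%nat by (unfold n; lia). rewrite csum_add.
  eapply Rle_trans; [apply Cmod_triangle |].
  assert (Hlast : Cmod (csum (fun k => e (phi k)) (0 + S n) 2) <= 2).
  { eapply Rle_trans; [apply Cmod_csum_le; intros; right; apply Cmod_e | simpl; lra]. }
  assert (Hdel : 0 < s / 2 <= 1 / 2) by (pose proof A_const_ge; split; nra).
  assert (Hmain := second_difference_test phi lam Lam (s / 2) n Hlam Hdel
                     (fun k Hk => Hsd k ltac:(unfold n in *; lia))).
  rewrite <- Hs2 in Hmain.
  assert (Hconst := block_const_le s Hs HAs).
  pose proof (pos_INR n).
  assert (0 <= INR n * Lam + 2) by nra.
  pose proof (main_case_le s Lam Y (INR n) Hs HAs ltac:(lra) HY14 ltac:(lra)).
  nra.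
Qed.

Theorem lemma10 (X Y : R) (f f1 f2 : R -> R) (lam Lam : R) :
  1 <= Y ->
  (* f is C^2 on (X, X+Y] with f' = f1, f'' = f2 *)
  (forall x, Ioc X (X + Y) x -> deriv_within (Ioc X (X + Y)) f x (f1 x)) ->
  (forall x, Ioc X (X + Y) x -> deriv_within (Ioc X (X + Y)) f1 x (f2 x)) ->
  (forall x, Ioc X (X + Y) x -> cont_within (Ioc X (X + Y)) f1 x) ->
  (forall x, Ioc X (X + Y) x -> cont_within (Ioc X (X + Y)) f2 x) ->
  0 < lam ->
  (forall x, Ioc X (X + Y) x -> lam <= f2 x <= Lam) ->
  Cmod (sum_int_range X Y (fun n => e (f (IZR n)))) / Y
  <= A_const * (sqrt (Lam ^ 2 / lam) + 2 / sqrt (lam * Y ^ 2)).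
Proof.
  intros HY Hf Hf1 _ _ Hlam Hf2.
  assert (HLam : lam <= Lam) by (assert (Hend := Hf2 (X + Y)); unfold Ioc in Hend; lra).
  assert (Hs : 0 < sqrt lam) by (apply sqrt_lt_R0; lra).
  replace (A_const * (sqrt (Lam ^ 2 / lam) + 2 / sqrt (lam * Y ^ 2)))
    with (A_const * (Lam * Y + 2) / sqrt lam / Y).
  2: { rewrite sqrt_div_alt, sqrt_pow2, sqrt_mult, sqrt_pow2 by nra. field; lra. }
  apply Rmult_le_compat_r; [apply Rlt_le, Rinv_0_lt_compat; lra |].
  rewrite (sum_int_range_csum X Y (fun x => e (f x))).
  apply Cmod_csum_e_le; [lra | lra | lra | apply range_count_bounds; lra |].
  intros k Hk. apply (second_difference_at_integers X Y f f1 f2); [lra | assumption ..].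
Qed.
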